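(* Let $X$ be a real Banach space and let $(\Omega,\Sigma,\mu)$ be a $\sigma$-finite measure space with $\mu(\Omega)>0$. Then $X$ has the property $( ** )$ if and only if $L_\infty(\mu,X)$ has the property $( ** )$.
   Context: All Banach spaces are real. For a Banach space $Z$, $B_Z$, $S_Z$ and $Z^*$ denote its closed unit ball, unit sphere and dual. For $z^*\in S_{Z^*}$ and $0<\alpha<1$, the slice is $S(z^*,\alpha)=\{z\in B_Z: z^*(z)>1-\alpha\}$, and $-S(z^*,\alpha)=\{-z: z\in S(z^*,\alpha)\}$. A Banach space $Z$ has the property $( ** )$ if for all $z_1,z_2\in S_Z$ and every $\varepsilon>0$ there exists $z^*\in S_{Z^*}$ such that, writing $S=S(z^*,\varepsilon)$, one has $z_1\in S$ and $\operatorname{dist}(z_2,S)+\operatorname{dist}(z_2,-S)<2+\varepsilon$. $L_\infty(\mu,X)$ is the Banach space of (classes of) strongly measurable essentially bounded functions $\Omega\to X$ with the essential supremum norm $\|f\|_\infty=\operatorname{ess\,sup}_{t\in\Omega}\|f(t)\|$. *)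

From HB Require Import structures.
From mathcomp Require Import all_boot all_order all_algebra.
From mathcomp Require Import all_classical all_reals all_analysis.
Set Implicit Arguments. Unset Strict Implicit. Unset Printing Implicit Defensive.
Import Order.TTheory GRing.Theory Num.Theory.
Import numFieldNormedType.Exports.
Local Open Scope classical_set_scope.
Local Open Scope ring_scope.

Section Star.
Variable R : realType.
(* A (semi)normed space is given as a subset [dom] of an ambient real vector
   space [V] (closed under the vector operations in our uses), with a
   (semi)norm [nrm] on it. *)
Variables (V : lmodType R) (dom : set V) (nrm : V -> R).

Definition lin_on (phi : V -> R) :=
  forall (a b : R) (x y : V), dom x -> dom y ->
    phi (a *: x + b *: y) = a * phi x + b * phi y.

Definition bounded_on (phi : V -> R) :=
  exists C : R, forall x, dom x -> `|phi x| <= C * nrm x.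

Definition dual_norm (phi : V -> R) : R :=
  sup [set `|phi x| | x in [set x | dom x /\ nrm x <= 1]].

Definition dual_sphere (phi : V -> R) :=
  [/\ lin_on phi, bounded_on phi & dual_norm phi = 1].

Definition slice (phi : V -> R) (a : R) : set V :=
  [set z | [/\ dom z, nrm z <= 1 & 1 - a < phi z]].

Definition nslice (phi : V -> R) (a : R) : set V :=
  [set - z | z in slice phi a].

Definition dist (z : V) (S : set V) : R :=
  inf [set nrm (z - s) | s in S].

Definition star2 : Prop :=
  forall z1 z2 : V, dom z1 -> dom z2 -> nrm z1 = 1 -> nrm z2 = 1 ->
  forall eps : R, 0 < eps ->
  exists phi : V -> R, [/\ dual_sphere phi, slice phi eps z1 &
     dist z2 (slice phi eps) + dist z2 (nslice phi eps) < 2 + eps].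
End Star.

Definition star2_normed (R : realType) (X : normedModType R) : Prop :=
  @star2 R X setT (fun x : X => `|x|).

Section Linfty.
Variables (d : measure_display) (T : measurableType d) (R : realType)
  (mu : {measure set T -> \bar R}) (X : normedModType R).

Definition simple_fun (g : T -> X) :=
  finite_set (range g) /\ forall x : X, measurable (g @^-1` [set x]).

Definition strongly_measurable (f : T -> X) :=
  exists g : nat -> T -> X, (forall n, simple_fun (g n)) /\
    {ae mu, forall t, (fun n => g n t) @ \oo --> f t}.

Definition ess_bounded (f : T -> X) :=
  exists M : R, {ae mu, forall t, `|f t| <= M}.

Definition Linfty_dom : set (T -> X) :=
  [set f | strongly_measurable f /\ ess_bounded f].

Definition ess_norm (f : T -> X) : R :=
  inf [set M : R | 0 <= M /\ {ae mu, forall t, `|f t| <= M}].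

(* L_infty(mu, X) has ( ** ): stated on representatives, with the
   ess-sup seminorm (equivalent to the quotient) *)
Definition star2_Linfty : Prop :=
  @star2 R (T -> X) Linfty_dom ess_norm.
End Linfty.

From HB Require Import structures.
From mathcomp Require Import all_boot all_order all_algebra.
From mathcomp Require Import all_classical all_reals all_analysis.
From mathcomp Require Import ring lra.
Import Order.TTheory GRing.Theory Num.Theory.
Import numFieldNormedType.Exports.
Local Open Scope classical_set_scope.
Local Open Scope ring_scope.
Set Implicit Arguments. Unset Strict Implicit. Unset Printing Implicit Defensive.

(* Both directions use the following reformulation of ( ** ): for unit z1, z2 and
   eps in (0, 1] there are a norming functional phi with z1 in the slice S(phi, eps)
   and two points y, w of that slice with |z2 - y| + |z2 + w| < 2 + eps.  The
   functionals come from Hahn-Banach, proved by Zorn's lemma for a seminorm on a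
   linearly closed subset, so that it applies both to X and to the representatives
   of L_infty with the ess-sup seminorm.
   From L_infty to X: apply ( ** ) to the constant functions z1, z2.  The resulting
   h, k make |z1 + h + k| close to 3 on a non-negligible set, so at a suitable point
   t the vectors h t, k t, rescaled into the ball, together with a norming
   functional of z1 + h t + k t form a witness in X.
   From X to L_infty: strongly measurable f1, f2 are, on a non-negligible set E,
   uniformly close to constants p, q with |p| close to 1.  Apply ( ** ) in X to the
   directions of p and q, put the resulting y, w on E (keeping f2, resp. -f2,
   elsewhere) to get h, k, and take a norming functional of f1 + h + k. *)

Section Seminormed.
Variables (R : realType) (V : lmodType R) (D : set V) (p : V -> R).
Hypothesis D_lin : forall a b x y, D x -> D y -> D (a *: x + b *: y).
Hypothesis p_subadd : forall x y, D x -> D y -> p (x + y) <= p x + p y.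
Hypothesis p_homog : forall a x, D x -> p (a *: x) = `|a| * p x.

Lemma D_scale a x : D x -> D (a *: x).
Proof. by move=> Dx; have := D_lin a 0 Dx Dx; rewrite scale0r addr0. Qed.

Lemma D_opp x : D x -> D (- x).
Proof. by move=> /(D_scale (-1)); rewrite scaleN1r. Qed.

Lemma D_add x y : D x -> D y -> D (x + y).
Proof. by move=> Dx Dy; have := D_lin 1 1 Dx Dy; rewrite !scale1r. Qed.

Lemma D_sub x y : D x -> D y -> D (x - y).
Proof. by move=> Dx /D_opp; exact: D_add. Qed.

Lemma seminormN x : D x -> p (- x) = p x.
Proof. by move=> Dx; rewrite -scaleN1r p_homog // normrN normr1 mul1r. Qed.

Lemma seminorm_ge0 x : D x -> 0 <= p x.
Proof.
move=> Dx; have p0 : p 0 = 0 by rewrite -(scale0r x) p_homog // normr0 mul0r.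
by have := p_subadd Dx (D_opp Dx); rewrite subrr p0 seminormN //; lra.
Qed.

Definition dominated_graph (G : set (V * R)) :=
  [/\ forall x r s, G (x, r) -> G (x, s) -> r = s,
      forall x r, G (x, r) -> D x /\ r <= p x &
      forall a b x y r s, G (x, r) -> G (y, s) -> G (a *: x + b *: y, a * r + b * s)].

Lemma dominated_graph_bigcup (F : set (set (V * R))) :
  (forall G, F G -> dominated_graph G) -> total_on F subset ->
  dominated_graph (\bigcup_(G in F) G).
Proof.
move=> FG Ftot; split.
- move=> x r s [G1 FG1 G1x] [G2 FG2 G2x].
  have [G12|G21] := Ftot _ _ FG1 FG2.
    by have [fun2 _ _] := FG _ FG2; apply: (fun2 x); [apply: G12|].
  by have [fun1 _ _] := FG _ FG1; apply: (fun1 x); [|apply: G21].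
- by move=> x r [G FG' Gx]; have [_ h _] := FG _ FG'; exact: h.
- move=> a b x y r s [G1 FG1 G1x] [G2 FG2 G2x].
  have [G12|G21] := Ftot _ _ FG1 FG2.
    by have [_ _ h] := FG _ FG2; exists G2 => //; apply: h => //; exact: G12.
  by have [_ _ h] := FG _ FG1; exists G1 => //; apply: h => //; exact: G21.
Qed.

Lemma dominated_graph_line x0 : D x0 ->
  dominated_graph [set (t *: x0, t * p x0) | t in [set: R]].
Proof.
move=> Dx0; split.
- move=> x r s [t _ [<- <-]] [u _ [tu <-]].
  have /eqP : (t - u) *: x0 = 0 by rewrite scalerBl tu subrr.
  rewrite scaler_eq0 subr_eq0 => /orP[/eqP -> //|/eqP x00].
  have -> : p x0 = 0 by rewrite x00 -(scale0r (0 : V)) p_homog ?normr0 ?mul0r // -x00.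
  by rewrite !mulr0.
- move=> x r [t _ [<- <-]]; split; first exact: D_scale.
  by rewrite p_homog // ler_wpM2r ?seminorm_ge0 ?ler_norm.
- move=> a b x y r s [t _ [<- <-]] [u _ [<- <-]].
  by exists (a * t + b * u) => //; rewrite !scalerA scalerDl !mulrA mulrDl.
Qed.

Lemma graph_extension_bound G z : dominated_graph G -> G !=set0 -> D z ->
  exists c, forall x r y s, G (x, r) -> G (y, s) ->
    r - p (x - z) <= c /\ c <= p (y + z) - s.
Proof.
move=> [_ Gdom Glin] [[x0 r0] G0] Dz.
have sep x r y s : G (x, r) -> G (y, s) -> r - p (x - z) <= p (y + z) - s.
  move=> Gxr Gys; have [Dx _] := Gdom _ _ Gxr; have [Dy _] := Gdom _ _ Gys.
  have [_] := Gdom _ _ (Glin 1 1 _ _ _ _ Gxr Gys); rewrite !scale1r !mul1r.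
  have -> : x + y = (x - z) + (y + z) by rewrite addrACA addNr addr0.
  by move/le_trans/(_ (p_subadd (D_sub Dx Dz) (D_add Dy Dz))); lra.
pose S := [set q.2 - p (q.1 - z) | q in G].
have ubS : ubound S (p (x0 + z) - r0) by move=> _ [[x r] Gxr <-]; exact: sep.
exists (sup S) => x r y s Gxr Gys; split.
  by apply: ub_le_sup; [exists (p (x0 + z) - r0)|exists (x, r)].
by apply: ge_sup; [exists (r0 - p (x0 - z)), (x0, r0)|move=> _ [[x' r'] G' <-]; exact: sep].
Qed.

Definition graph_ext (G : set (V * R)) z c : set (V * R) :=
  [set q | exists x r t, G (x, r) /\ q = (x + t *: z, r + t * c)].

Section Extension.
Variables (G : set (V * R)) (z : V) (c : R).
Hypotheses (GG : dominated_graph G) (Dz : D z).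
Hypothesis c_ub : forall x r, G (x, r) -> r - p (x - z) <= c.
Hypothesis c_lb : forall y s, G (y, s) -> c <= p (y + z) - s.

Lemma graph_ext_dominated x r t : G (x, r) -> r + t * c <= p (x + t *: z).
Proof.
have [_ Gdom Glin] := GG; move=> Gxr; have [Dx _] := Gdom _ _ Gxr.
have Gsc a : G (a *: x, a * r).
  by have := Glin a 0 _ _ _ _ Gxr Gxr; rewrite scale0r addr0 mul0r addr0.
have [t0|t0|->] := ltgtP t 0; last by rewrite scale0r mul0r !addr0; have [] := Gdom _ _ Gxr.
- have nt0 : 0 < - t by rewrite oppr_gt0.
  have -> : x + t *: z = (- t) *: ((- t)^-1 *: x - z).
    by rewrite scalerBr scalerA mulfV ?gt_eqF // scale1r scaleNr opprK.
  rewrite p_homog; last by apply: D_sub => //; exact: D_scale.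
  have h : (- t)^-1 * r - c <= p ((- t)^-1 *: x - z).
    by have := c_ub (Gsc (- t)^-1); lra.
  have := ler_wpM2l (ltW nt0) h; rewrite mulrBr mulrA mulfV ?gt_eqF // mul1r gtr0_norm //.
  lra.
- have -> : x + t *: z = t *: (t^-1 *: x + z).
    by rewrite scalerDr scalerA mulfV ?scale1r // gt_eqF.
  rewrite p_homog; last by apply: D_add => //; exact: D_scale.
  have := ler_wpM2l (ltW t0) (c_lb (Gsc t^-1)).
  rewrite mulrBr mulrA mulfV ?gt_eqF // mul1r gtr0_norm //; lra.
Qed.

Lemma dominated_graph_ext : ~ (exists r, G (z, r)) -> dominated_graph (graph_ext G z c).
Proof.
have [Gfun Gdom Glin] := GG; move=> zG; split.
- move=> q r s [x [r1 [t [Gxr1 [-> ->]]]]] [y [s1 [u [Gys1 [exy ->]]]]].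
  have [tu|ntu] := eqVneq t u.
    by move: exy Gxr1; rewrite tu => /addIr -> Gyr1; rewrite (Gfun _ _ _ Gyr1 Gys1).
  exfalso; apply: zG; exists ((t - u)^-1 * (s1 - r1)).
  have -> : z = (t - u)^-1 *: (y - x).
    have <- : (t - u) *: z = y - x.
      by rewrite scalerBl; apply/eqP; rewrite subr_eq addrAC -exy addrAC subrr add0r.
    by rewrite scalerA mulVf ?scale1r // subr_eq0.
  have := Glin ((t - u)^-1) (- (t - u)^-1) _ _ _ _ Gys1 Gxr1.
  by rewrite scaleNr mulNr -scalerBr -mulrBr.
- move=> q r [x [r1 [t [Gxr1 [-> ->]]]]]; have [Dx _] := Gdom _ _ Gxr1.
  split; first by apply: D_add => //; exact: D_scale.
  exact: graph_ext_dominated.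
- move=> a b q1 q2 r s [x [r1 [t [Gxr1 [-> ->]]]]] [y [s1 [u [Gys1 [-> ->]]]]].
  exists (a *: x + b *: y), (a * r1 + b * s1), (a * t + b * u); split; first exact: Glin.
  congr pair; first by rewrite !scalerDr scalerDl !scalerA addrACA.
  by rewrite !mulrDr mulrDl !mulrA addrACA.
Qed.

End Extension.

Lemma maximal_dominated_graph_total A z : dominated_graph A -> A !=set0 ->
  (forall B, A `<` B -> ~ dominated_graph B) -> D z -> exists r, A (z, r).
Proof.
move=> GA [[x0 r0] Ax0] Amax Dz; apply: contrapT => zA.
have [c hc] := graph_extension_bound GA (ex_intro _ _ Ax0) Dz.
have c_ub x r : A (x, r) -> r - p (x - z) <= c by move=> Axr; have [] := hc _ _ _ _ Axr Ax0.
have c_lb y s : A (y, s) -> c <= p (y + z) - s by move=> Ays; have [] := hc _ _ _ _ Ax0 Ays.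
apply: (Amax _ _ (dominated_graph_ext GA Dz c_ub c_lb zA)); split.
  by move=> [x r] Axr; exists x, r, 0; rewrite scale0r mul0r !addr0.
move=> /(_ (z, c)) extA; apply: zA; exists c; apply: extA.
exists 0, 0, 1; rewrite add0r scale1r mul1r add0r; split => //.
by have [_ _ Alin] := GA; have := Alin 0 0 _ _ _ _ Ax0 Ax0; rewrite !scale0r !mul0r !addr0.
Qed.

Theorem hahn_banach x0 : D x0 ->
  exists phi, [/\ lin_on D phi, forall x, D x -> `|phi x| <= p x & phi x0 = p x0].
Proof.
(* The disjunct [G = set0] lets the empty chain pass the hypothesis of Zorn's lemma. *)
move=> Dx0; pose P G := dominated_graph G /\ (G = set0 \/ G (x0, p x0)).
have [A [[GA A0] Amax]] : exists A, P A /\ forall B, A `<` B -> ~ P B.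
  apply: Zorn_bigcup => F FP Ftot; split.
    by apply: dominated_graph_bigcup => // G /FP[].
  have [[G FG Gx0]|F0] := pselect (exists2 G, F G & G (x0, p x0)); first by right; exists G.
  left; apply/seteqP; split => // q [G FG Gq].
  by have [_ [G0|Gx0]] := FP _ FG; [rewrite G0 in Gq|apply: F0; exists G].
have Ax0 : A (x0, p x0).
  case: A0 => // A0; exfalso.
  have line_x0 : [set (t *: x0, t * p x0) | t in [set: R]] (x0, p x0).
    by exists 1 => //; rewrite scale1r mul1r.
  apply: (Amax _ _ (conj (dominated_graph_line Dx0) (or_intror line_x0))).
  by rewrite A0; split => // /(_ _ line_x0).
have Atot z : D z -> exists r, A (z, r).
  apply: maximal_dominated_graph_total (ex_intro _ _ Ax0) _ => // B AB GB.
  by apply: (Amax _ AB); split => //; right; case: AB => /(_ _ Ax0).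
pose phi z := xget 0 [set r | A (z, r)].
have Aphi z : D z -> A (z, phi z) by move=> /Atot; exact: xgetPex.
have [Afun Adom Alin] := GA; exists phi; split.
- move=> a b x y Dx Dy; apply: (Afun (a *: x + b *: y)); first exact/Aphi/D_lin.
  exact: Alin (Aphi _ Dx) (Aphi _ Dy).
- move=> x Dx; rewrite ler_norml; apply/andP; split; last by have [] := Adom _ _ (Aphi _ Dx).
  have := Alin (-1) 0 _ _ _ _ (Aphi _ Dx) (Aphi _ Dx).
  rewrite scale0r addr0 mul0r addr0 scaleN1r mulN1r => /Adom[_].
  by rewrite seminormN // lerNl.
- by apply: (Afun x0); [exact: Aphi|].
Qed.

Lemma lin_onZ phi a x : lin_on D phi -> D x -> phi (a *: x) = a * phi x.
Proof. by move=> phil Dx; have := phil a 0 x x Dx Dx; rewrite scale0r addr0 mul0r addr0. Qed.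

Lemma lin_onD phi x y : lin_on D phi -> D x -> D y -> phi (x + y) = phi x + phi y.
Proof. by move=> phil Dx Dy; have := phil 1 1 x y Dx Dy; rewrite !scale1r !mul1r. Qed.

Lemma dual_sphere_le phi x : dual_sphere D p phi -> D x -> `|phi x| <= p x.
Proof.
move=> [phil [C phiC] phi1] Dx; have [px0|px0] := eqVneq (p x) 0.
  by have := phiC x Dx; rewrite px0 mulr0.
have pxp : 0 < p x by rewrite lt_neqAle eq_sym px0 seminorm_ge0.
have ub : ubound [set `|phi x| | x in [set x | D x /\ p x <= 1]] `|C|.
  move=> _ [y [Dy py1] <-]; apply: (le_trans (phiC y Dy)).
  have := seminorm_ge0 Dy; have := ler_norm C; have := normr_ge0 C; nra.
have : `|phi ((p x)^-1 *: x)| <= 1.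
  rewrite -phi1; apply: ub_le_sup; first by exists `|C|.
  exists ((p x)^-1 *: x) => //; split; first exact: D_scale.
  by rewrite p_homog // normfV gtr0_norm // mulVf.
by rewrite lin_onZ // normrM normfV (gtr0_norm pxp) ler_pdivrMl // mulr1.
Qed.

Lemma dual_sphere_norming phi x0 : lin_on D phi -> (forall x, D x -> `|phi x| <= p x) ->
  D x0 -> 0 < p x0 -> phi x0 = p x0 -> dual_sphere D p phi.
Proof.
move=> phil phip Dx0 px0 phix0; split => //; first by exists 1 => x Dx; rewrite mul1r; exact: phip.
have ub : ubound [set `|phi x| | x in [set x | D x /\ p x <= 1]] 1.
  by move=> _ [x [Dx px1] <-]; apply: le_trans px1; exact: phip.
have one_in : [set `|phi x| | x in [set x | D x /\ p x <= 1]] 1.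
  exists ((p x0)^-1 *: x0).
    by split; [exact: D_scale|rewrite p_homog // normfV gtr0_norm // mulVf ?gt_eqF].
  by rewrite lin_onZ // phix0 mulVf ?gt_eqF // normr1.
apply/le_anti/andP; split; first by apply: ge_sup => //; exists 1.
by apply: ub_le_sup => //; exists 1.
Qed.

Lemma exists_norming_functional x0 : D x0 -> 0 < p x0 ->
  exists phi, dual_sphere D p phi /\ phi x0 = p x0.
Proof.
move=> Dx0 px0; have [phi [phil phip phix0]] := hahn_banach Dx0.
by exists phi; split => //; exact: (dual_sphere_norming phil phip Dx0).
Qed.

Lemma norming_functional_triple x1 x2 x3 del : D x1 -> D x2 -> D x3 ->
  p x1 <= 1 -> p x2 <= 1 -> p x3 <= 1 -> del <= 3 -> 3 - del < p (x1 + x2 + x3) ->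
  exists phi, [/\ dual_sphere D p phi, 1 - del < phi x1, 1 - del < phi x2 & 1 - del < phi x3].
Proof.
move=> Dx1 Dx2 Dx3 px1 px2 px3 del3 psum.
have Dsum := D_add (D_add Dx1 Dx2) Dx3.
have psum0 : 0 < p (x1 + x2 + x3) by apply: le_lt_trans psum; rewrite subr_ge0.
have [phi [sphi phisum]] := exists_norming_functional Dsum psum0.
have [phil _ _] := sphi.
rewrite (lin_onD phil (D_add Dx1 Dx2) Dx3) (lin_onD phil Dx1 Dx2) in phisum.
have le1 x : D x -> p x <= 1 -> phi x <= 1.
  by move=> Dx px; apply: le_trans px; apply: le_trans (dual_sphere_le sphi Dx); exact: ler_norm.
have := le1 _ Dx1 px1; have := le1 _ Dx2 px2; have := le1 _ Dx3 px3.
by move=> ? ? ?; exists phi; split => //; lra.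
Qed.

Lemma dist_ub z S s : D z -> S `<=` D -> S s -> dist p z S <= p (z - s).
Proof.
move=> Dz SD Ss; apply: ge_inf; last by exists s.
by exists 0 => _ [y Sy <-]; exact/seminorm_ge0/D_sub/SD.
Qed.

Lemma slice_sub phi e eps : e <= eps -> slice D p phi e `<=` slice D p phi eps.
Proof. by move=> le_e z [Dz pz phiz]; split => //; lra. Qed.

Definition star2_witness phi z1 z2 eps :=
  [/\ dual_sphere D p phi, slice D p phi eps z1 &
      exists y w, [/\ slice D p phi eps y, slice D p phi eps w &
                      p (z2 - y) + p (z2 + w) < 2 + eps]].

Lemma star2_witnessP : star2 D p <->
  forall z1 z2, D z1 -> D z2 -> p z1 = 1 -> p z2 = 1 ->
  forall eps, 0 < eps <= 1 -> exists phi, star2_witness phi z1 z2 eps.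
Proof.
split=> [star z1 z2 Dz1 Dz2 pz1 pz2 eps /andP[eps0 _]|wit z1 z2 Dz1 Dz2 pz1 pz2 eps eps0].
  have [phi [sphi sl1 dsum]] := star z1 z2 Dz1 Dz2 pz1 pz2 eps eps0.
  set a := dist p z2 _ in dsum; set b := dist p z2 _ in dsum.
  pose r := (2 + eps - (a + b)) / 2.
  have r0 : 0 < r by rewrite divr_gt0 // subr_gt0.
  have [_ [y sly <-] hy] : exists2 d, [set p (z2 - s) | s in slice D p phi eps] d & d < a + r.
    by apply: inf_lt; [exists (p (z2 - z1)), z1|rewrite ltrDl].
  have [_ [_ [w slw <-] <-] hw] :
      exists2 d, [set p (z2 - s) | s in nslice D p phi eps] d & d < b + r.
    by apply: inf_lt; [exists (p (z2 - - z1)), (- z1) => //; exists z1|rewrite ltrDl].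
  exists phi; split => //; exists y, w; split => //.
  have : a + r + (b + r) = 2 + eps by rewrite /r; field.
  by rewrite opprK in hw; lra.
pose e := Num.min eps 1.
have e01 : 0 < e <= 1 by rewrite lt_min eps0 ltr01 ge_min lexx orbT.
have ee : e <= eps by rewrite ge_min lexx.
have [phi [sphi sl1 [y [w [sly slw yw]]]]] := wit z1 z2 Dz1 Dz2 pz1 pz2 e e01.
exists phi; split => //; first exact: slice_sub sl1.
have slD : slice D p phi eps `<=` D by move=> ? [].
have nslD : nslice D p phi eps `<=` D by move=> _ [s [Ds _ _] <-]; exact: D_opp.
have nslw : nslice D p phi eps (- w) by exists w => //; exact: slice_sub slw.
have := dist_ub Dz2 slD (slice_sub ee sly); have := dist_ub Dz2 nslD nslw.
by rewrite opprK; lra.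
Qed.

End Seminormed.

Section Normed.
Variables (R : realType) (X : normedModType R).

Let setT_lin (a b : R) (x y : X) : [set: X] x -> [set: X] y -> [set: X] (a *: x + b *: y).
Proof. by []. Qed.
Let norm_subadd (x y : X) : [set: X] x -> [set: X] y -> `|x + y| <= `|x| + `|y|.
Proof. by move=> _ _; exact: ler_normD. Qed.
Let norm_homog (a : R) (x : X) : [set: X] x -> `|a *: x| = `|a| * `|x|.
Proof. by move=> _; exact: normrZ. Qed.

Lemma star2_normed_witnessP : star2_normed X <->
  forall z1 z2 : X, `|z1| = 1 -> `|z2| = 1 -> forall eps, 0 < eps <= 1 ->
  exists phi, star2_witness [set: X] (fun x : X => `|x|) phi z1 z2 eps.
Proof.
rewrite /star2_normed (star2_witnessP setT_lin norm_subadd norm_homog).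
by split=> h z1 z2; [exact: h|move=> _ _; exact: h].
Qed.

Lemma dual_sphere_norm_le phi (x : X) :
  dual_sphere [set: X] (fun x : X => `|x|) phi -> `|phi x| <= `|x|.
Proof. by move=> sphi; exact: (dual_sphere_le setT_lin norm_subadd norm_homog sphi). Qed.

Lemma shrink_to_ball (v : X) del : 0 <= del -> `|v| <= 1 + del ->
  `|(1 + del)^-1 *: v| <= 1 /\ `|v - (1 + del)^-1 *: v| <= del.
Proof.
move=> del0 v1; set c := (1 + del)^-1.
have c0 : 0 < c by rewrite invr_gt0; lra.
have c1 : c * (1 + del) = 1 by rewrite mulVf // gt_eqF //; lra.
have v0 := normr_ge0 v.
rewrite -{2}(scale1r v) -scalerBl !normrZ (gtr0_norm c0) ger0_norm; last by nra.
by split; nra.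
Qed.

Lemma unit_direction (u : X) : `|u| = 1 -> forall q : X, exists2 qh : X, `|qh| = 1 & q = `|q| *: qh.
Proof.
move=> u1 q; have [->|q0] := eqVneq q 0; first by exists u; rewrite // normr0 scale0r.
exists (`|q|^-1 *: q); first by rewrite normrZ normfV normr_id mulVf ?normr_eq0.
by rewrite scalerA mulfV ?normr_eq0 // scale1r.
Qed.

Lemma norm_scale_sub_le (qh y : X) (lam : R) : 0 <= lam ->
  `|lam *: qh - y| <= lam * `|qh - y| + `|1 - lam| * `|y|.
Proof.
move=> lam0; have -> : lam *: qh - y = lam *: (qh - y) + (lam - 1) *: y.
  by rewrite scalerBr scalerBl scale1r addrA subrK.
by apply: (le_trans (ler_normD _ _)); rewrite !normrZ (ger0_norm lam0) (distrC lam 1).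
Qed.

Lemma norm_scale_sub_add_le (qh y w : X) (lam : R) : 0 <= lam -> `|y| <= 1 -> `|w| <= 1 ->
  `|lam *: qh - y| + `|lam *: qh + w| <= lam * (`|qh - y| + `|qh + w|) + 2 * `|1 - lam|.
Proof.
move=> lam0 y1 w1; have := norm_scale_sub_le qh y lam0.
have := norm_scale_sub_le qh (- w) lam0; rewrite !opprK normrN.
have := normr_ge0 (1 - lam); nra.
Qed.

Lemma normed_witness_of_triple (z1 z2 x y : X) del : `|z1| = 1 -> 0 < del <= 1 ->
  `|x| <= 1 + del -> `|y| <= 1 + del -> 3 - del < `|z1 + x + y| ->
  `|z2 - x| + `|z2 + y| < 2 + del ->
  exists phi, star2_witness [set: X] (fun x : X => `|x|) phi z1 z2 (3 * del).
Proof.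
move=> z11 /andP[del0 del1] x1 y1 big close; pose c := (1 + del)^-1.
have [cx1 xcx] := shrink_to_ball (ltW del0) x1.
have [cy1 ycy] := shrink_to_ball (ltW del0) y1.
have tri : `|z1 + x + y| <= `|z1 + c *: x + c *: y| + (`|x - c *: x| + `|y - c *: y|).
  have -> : z1 + x + y = (z1 + c *: x + c *: y) + ((x - c *: x) + (y - c *: y)).
    by rewrite addrACA (addrACA z1) (addrCA (c *: y)) !subrr !addr0.
  by apply: (le_trans (ler_normD _ _)); rewrite lerD2l ler_normD.
have big' : 3 - 3 * del < `|z1 + c *: x + c *: y| by lra.
have z1le : `|z1| <= 1 by rewrite z11.
have del3 : 3 * del <= 3 by lra.
have [phi [sphi phiz1 phix phiy]] :=
  norming_functional_triple setT_lin norm_subadd norm_homog I I I z1le cx1 cy1 del3 big'.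
have zx := ler_normD (z2 - x) (x - c *: x); rewrite addrA subrK in zx.
have zy := ler_normD (z2 + y) (c *: y - y); rewrite addrCA addrK addrC distrC in zy.
exists phi; split => //; exists (c *: x), (c *: y); split => //; lra.
Qed.

Lemma star2_normed_pair (p q : X) e : star2_normed X -> p != 0 -> 0 < e <= 1 ->
  exists y w, [/\ `|y| <= 1, `|w| <= 1, (`|p| + 2) * (1 - e) < `|p + y + w| &
    `|q - y| + `|q + w| <= `|q| * (2 + e) + 2 * `|1 - `|q| |].
Proof.
move=> /star2_normed_witnessP HX p0 e01; have pp : 0 < `|p| by rewrite normr_gt0.
pose ph := `|p|^-1 *: p.
have nph : `|ph| = 1 by rewrite normrZ normfV normr_id mulVf ?gt_eqF.
have [qh nqh qE] := unit_direction nph q.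
have [phi [sphi [_ _ phiph] [y [w [[_ ny phiy] [_ nw phiw] yw]]]]] := HX ph qh nph nqh e e01.
exists y, w; split => //.
  have [phil _ _] := sphi.
  have pE : p = `|p| *: ph by rewrite /ph scalerA mulfV ?gt_eqF // scale1r.
  have : phi (p + y + w) = `|p| * phi ph + phi y + phi w.
    by rewrite !(lin_onD phil) // {1}pE (lin_onZ _ phil).
  have := le_trans (ler_norm _) (dual_sphere_norm_le (p + y + w) sphi).
  have : `|p| * (1 - e) < `|p| * phi ph by rewrite ltr_pM2l.
  lra.
have := norm_scale_sub_add_le qh (normr_ge0 q) ny nw; rewrite -qE => /le_trans; apply.
by rewrite lerD2r ler_wpM2l // ltW.
Qed.

End Normed.

Section Linfty.
Variables (d : measure_display) (T : measurableType d) (R : realType)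
  (mu : {measure set T -> \bar R}) (X : normedModType R).
Implicit Types (f g : T -> X) (E : set T).

Lemma ae_exists_not (P Q : T -> Prop) :
  ~ {ae mu, forall t, P t} -> {ae mu, forall t, Q t} -> exists t, ~ P t /\ Q t.
Proof.
move=> nP aQ; apply: contrapT => nPQ; apply: nP; apply: filterS aQ => t Qt.
by apply: contrapT => nPt; apply: nPQ; exists t.
Qed.

Lemma not_negligible_ae_exists E (Q : T -> Prop) :
  ~ mu.-negligible E -> {ae mu, forall t, Q t} -> exists t, E t /\ Q t.
Proof.
move=> nE aQ; have [|t [/contrapT Et Qt]] := ae_exists_not (P := fun t => ~ E t) _ aQ.
  by apply: contra_not nE; apply: negligibleS => t /= Et; exact.
by exists t.
Qed.

Lemma ess_norm_ge0 f : 0 <= ess_norm mu f.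
Proof.
have [[M [M0 fM]]|nM] := pselect (exists M, 0 <= M /\ {ae mu, forall t, `|f t| <= M}).
  by apply: lb_le_inf; [exists M|move=> y []].
rewrite /ess_norm (_ : [set M | _] = set0) ?inf0 //.
by apply/seteqP; split => // M hM; apply: nM; exists M.
Qed.

Lemma ess_norm_le f M : 0 <= M -> {ae mu, forall t, `|f t| <= M} -> ess_norm mu f <= M.
Proof. by move=> M0 fM; apply: ge_inf; [exists 0 => y []|split]. Qed.

Lemma ess_norm_lt f M : ess_bounded mu f -> ess_norm mu f < M -> {ae mu, forall t, `|f t| < M}.
Proof.
move=> [M0 fM0] /inf_lt [].
  exists (Num.max M0 0); split; first by rewrite le_max lexx orbT.
  by apply: filterS fM0 => t ft; rewrite le_max ft.
by move=> M' [_ fM'] M'M; apply: filterS fM' => t ft; exact: le_lt_trans ft M'M.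
Qed.

Lemma ess_norm_gt f M : 0 <= M -> M < ess_norm mu f -> ~ {ae mu, forall t, `|f t| <= M}.
Proof. by move=> M0 Mf /(ess_norm_le M0); rewrite leNgt Mf. Qed.

Lemma ess_norm_ge f E m : ess_bounded mu f -> ~ mu.-negligible E ->
  {ae mu, forall t, E t -> m <= `|f t|} -> m <= ess_norm mu f.
Proof.
move=> fb nE fm; rewrite leNgt; apply/negP => /(ess_norm_lt fb) flt.
have [t [Et [mft ftm]]] := not_negligible_ae_exists nE (filterI fm flt).
by have := le_lt_trans (mft Et) ftm; rewrite ltxx.
Qed.

Lemma ess_bounded_lin f g (a b : R) :
  ess_bounded mu f -> ess_bounded mu g -> ess_bounded mu (a *: f + b *: g).
Proof.
move=> [M fM] [N gN]; exists (`|a| * M + `|b| * N).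
apply: filterS2 fM gN => t ft gt; apply: (le_trans (ler_normD _ _)).
by rewrite !normrZ lerD // ler_wpM2l.
Qed.

Lemma ler_ess_normD f g : ess_bounded mu f -> ess_bounded mu g ->
  ess_norm mu (f + g) <= ess_norm mu f + ess_norm mu g.
Proof.
move=> fb gb; apply/ler_addgt0Pr => e e0.
have e2 : 0 < e / 2 by rewrite divr_gt0.
have /(ess_norm_lt fb) fe : ess_norm mu f < ess_norm mu f + e / 2 by rewrite ltrDl.
have /(ess_norm_lt gb) ge : ess_norm mu g < ess_norm mu g + e / 2 by rewrite ltrDl.
have := ess_norm_ge0 f; have := ess_norm_ge0 g => g0 f0.
apply: ess_norm_le; first by lra.
apply: filterS2 fe ge => t ft gt; apply: (le_trans (ler_normD _ _)) => /=; lra.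
Qed.

Lemma ess_normZ_le f (a : R) : ess_bounded mu f -> ess_norm mu (a *: f) <= `|a| * ess_norm mu f.
Proof.
move=> fb; apply/ler_addgt0Pr => e e0.
have a1 : 0 < `|a| + 1 by have := normr_ge0 a; lra.
have /(ess_norm_lt fb) fe : ess_norm mu f < ess_norm mu f + e / (`|a| + 1).
  by rewrite ltrDl divr_gt0.
have ae_le : `|a| * (e / (`|a| + 1)) <= e by rewrite mulrA ler_pdivrMr //; nra.
apply: (@le_trans _ _ (`|a| * (ess_norm mu f + e / (`|a| + 1)))); last by rewrite mulrDr lerD2l.
apply: ess_norm_le; first by rewrite mulr_ge0 // addr_ge0 ?ess_norm_ge0 // ltW // divr_gt0.
by apply: filterS fe => t ft /=; rewrite normrZ ler_wpM2l // ltW.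
Qed.

Lemma ess_normZ f (a : R) : ess_bounded mu f -> ess_norm mu (a *: f) = `|a| * ess_norm mu f.
Proof.
move=> fb; apply/le_anti; rewrite ess_normZ_le //=.
have [->|a0] := eqVneq a 0; first by rewrite normr0 mul0r ess_norm_ge0.
have afb : ess_bounded mu (a *: f) by have := ess_bounded_lin a 0 fb fb; rewrite scale0r addr0.
have := ess_normZ_le a^-1 afb; rewrite scalerA mulVf // scale1r normfV => h.
by rewrite -ler_pdivlMl ?normr_gt0 // mulrC.
Qed.

Lemma ess_norm_cst (x : X) : (0 < mu setT)%E -> ess_norm mu (fun _ => x) = `|x|.
Proof.
move=> mu0; apply/le_anti/andP; split; first exact/ess_norm_le/aeW.
have xb : ess_bounded mu (fun _ => x) by exists `|x|; exact: aeW.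
have muF := ae_properfilter_algebraOfSetsType mu0.
rewrite leNgt; apply/negP => /(ess_norm_lt xb) /filter_ex[t].
by rewrite ltxx.
Qed.

Lemma simple_fun_preimage g (S : set X) : simple_fun g -> measurable (g @^-1` S).
Proof.
move=> [gfin gm]; have -> : g @^-1` S = \bigcup_(x in range g `&` S) g @^-1` [set x].
  apply/seteqP; split=> [t St|t [x [_ Sx] /= ->] //].
  by exists (g t) => //; split => //; exists t.
by apply: fin_bigcup_measurable => //; exact: finite_setIl.
Qed.

Lemma simple_fun_lin g h (a b : R) :
  simple_fun g -> simple_fun h -> simple_fun (a *: g + b *: h).
Proof.
move=> sg sh; have [gfin _] := sg; have [hfin _] := sh; split.
  exact: (finite_image11 (fun u v => a *: u + b *: v) gfin hfin).
move=> x; have -> : (a *: g + b *: h) @^-1` [set x] =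
    \bigcup_(u in range g) (g @^-1` [set u] `&` h @^-1` [set v | a *: u + b *: v = x]).
  apply/seteqP; split=> [t /= <-|t [u _ [/= <- /= <-]] //].
  by exists (g t); [exists t|].
by apply: fin_bigcup_measurable => // u _; apply: measurableI; exact: simple_fun_preimage.
Qed.

Lemma simple_fun_cst (y : X) : simple_fun (fun _ : T => y).
Proof.
split=> [|x]; first exact: finite_image_cst.
by rewrite -/(cst y) preimage_cst; case: ifPn.
Qed.

Lemma simple_fun_patch E (y : X) g :
  measurable E -> simple_fun g -> simple_fun (patch g E (cst y)).
Proof.
move=> mE [gfin gm]; split.
  apply: (@sub_finite_set _ _ ([set y] `|` range g)); last by rewrite finite_setU; split.
  by move=> _ [t _ <-]; rewrite /patch; case: ifPn => _; [left|right; exists t].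
move=> x; have -> : patch g E (cst y) @^-1` [set x] =
    (E `&` cst y @^-1` [set x]) `|` (~` E `&` g @^-1` [set x]).
  apply/seteqP; split=> t /=; rewrite /patch;
    case: ifPn => [/set_mem Et|/negP/(contra_not (@mem_set _ _ _)) Et].
  - by move=> ytx; left.
  - by move=> gtx; right.
  - by case=> [[]|[]].
  - by case=> [[]|[]].
by apply: measurableU; apply: measurableI => //;
  [rewrite preimage_cst; case: ifPn|exact: measurableC].
Qed.

Lemma strongly_measurable_lin f g (a b : R) : strongly_measurable mu f ->
  strongly_measurable mu g -> strongly_measurable mu (a *: f + b *: g).
Proof.
move=> [u [su cu]] [v [sv cv]]; exists (fun n => a *: u n + b *: v n); split.
  by move=> n; exact: simple_fun_lin.
by apply: filterS2 cu cv => t fu gv; apply: cvgD; apply: cvgZ => //; exact: cvg_cst.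
Qed.

Lemma strongly_measurable_cst (y : X) : strongly_measurable mu (fun _ => y).
Proof.
exists (fun _ _ => y); split; first by move=> n; exact: simple_fun_cst.
by apply: aeW => t; exact: cvg_cst.
Qed.

Lemma strongly_measurable_patch E (y : X) f : measurable E ->
  strongly_measurable mu f -> strongly_measurable mu (patch f E (cst y)).
Proof.
move=> mE [u [su cu]]; exists (fun n => patch (u n) E (cst y)); split.
  by move=> n; exact: simple_fun_patch.
by apply: filterS cu => t fu; rewrite /patch; case: ifPn => _ //; exact: cvg_cst.
Qed.

Lemma Linfty_dom_lin (a b : R) f g :
  Linfty_dom mu f -> Linfty_dom mu g -> Linfty_dom mu (a *: f + b *: g).
Proof.
move=> [sf bf] [sg bg]; split; first exact: strongly_measurable_lin.
exact: ess_bounded_lin.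
Qed.

Lemma Linfty_dom_cst (y : X) : Linfty_dom mu (fun _ => y).
Proof. by split; [exact: strongly_measurable_cst|exists `|y|; exact: aeW]. Qed.

Lemma Linfty_dom_patch E (y : X) f :
  measurable E -> Linfty_dom mu f -> Linfty_dom mu (patch f E (cst y)).
Proof.
move=> mE [sf [M fM]]; split; first exact: strongly_measurable_patch.
exists (Num.max `|y| M); apply: filterS fM => t ft; rewrite /patch.
by case: ifPn => _; rewrite le_max ?lexx ?ft ?orbT.
Qed.

Lemma negligible_fin_bigcup (I : choiceType) (A : set I) (F : I -> set T) :
  finite_set A -> (forall i, A i -> mu.-negligible (F i)) ->
  mu.-negligible (\bigcup_(i in A) F i).
Proof.
move=> /finite_fsetP[s ->] Fneg; rewrite bigcup_fset big_seq.
by apply: big_ind; [exact: negligible_set0|exact: negligibleU|move=> i /Fneg].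
Qed.

Lemma cvg_dist_le (u : nat -> X) (l y : X) (r : R) n : 0 < r ->
  u m @[m --> \oo] --> l -> (forall m, (n <= m)%N -> `|y - u m| < r) -> `|y - l| <= r.
Proof.
move=> r0 ul ur; suff : closed_ball y r l by rewrite closed_ballE.
apply: (closed_cvg _ (@closed_ball_closed _ _ y r) _ _ ul); exists n => // m /= nm.
by rewrite closed_ballE //; exact/ltW/ur.
Qed.

(* Pinning the values at time [n] makes the union over [pq] finite for each [n]. *)
Definition settled_set (u v : nat -> T -> X) n (pq : X * X) (del : R) : set T :=
  [set t | [/\ u n t = pq.1, v n t = pq.2 &
    forall m, (n <= m)%N -> `|pq.1 - u m t| < del /\ `|pq.2 - v m t| < del]].

Lemma measurable_settled_set u v n pq del : (forall n, simple_fun (u n)) ->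
  (forall n, simple_fun (v n)) -> measurable (settled_set u v n pq del).
Proof.
move=> su sv; have -> : settled_set u v n pq del = u n @^-1` [set pq.1] `&` v n @^-1` [set pq.2] `&`
    \bigcap_(m in [set m | (n <= m)%N])
      (u m @^-1` [set x | `|pq.1 - x| < del] `&` v m @^-1` [set x | `|pq.2 - x| < del]).
  apply/seteqP; split=> t; first by move=> [? ? um]; split; [split|move=> m /um[]].
  by move=> [[? ?] um]; split => // m /um[].
apply: measurableI; first by apply: measurableI; exact: simple_fun_preimage.
apply: bigcap_measurable; first by exists n => /=.
by move=> m _; apply: measurableI; exact: simple_fun_preimage.
Qed.

Lemma strongly_measurable_near_cst f1 f2 (del r : R) : 0 < del ->
  strongly_measurable mu f1 -> strongly_measurable mu f2 ->
  ~ {ae mu, forall t, `|f1 t| <= r} ->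
  exists E p q, [/\ measurable E, ~ mu.-negligible E, r - del < `|p| &
    {ae mu, forall t, E t -> `|p - f1 t| <= del /\ `|q - f2 t| <= del}].
Proof.
move=> del0 [u [su cu]] [v [sv cv]] f1big; apply: contrapT => none.
pose B n pq := settled_set u v n pq del.
have Bneg n pq : r - del < `|pq.1| -> mu.-negligible (B n pq).
  move=> pbig; apply: contrapT => nB; apply: none; exists (B n pq), pq.1, pq.2.
  split => //; first exact: measurable_settled_set.
  apply: filterS2 cu cv => t c1 c2 [_ _ um].
  by split; [apply: (cvg_dist_le del0 c1) => m /um[]|apply: (cvg_dist_le del0 c2) => m /um[]].
pose U := \bigcup_n \bigcup_(pq in range (fun t => (u n t, v n t)) `&`
  [set pq | r - del < `|pq.1|]) B n pq.
have Uneg : {ae mu, forall t, ~ U t}.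
  apply: negligibleS (_ : mu.-negligible U) => [t /= /contrapT //|].
  apply: negligible_bigcup => n; apply: negligible_fin_bigcup => [|pq [_]]; last exact: Bneg.
  exact/finite_setIl/(finite_image11 pair (su n).1 (sv n).1).
apply: f1big; apply: filterS2 (filterI cu cv) Uneg => t [c1 c2] nU.
rewrite leNgt; apply/negP => f1r; apply: nU.
have d2 : 0 < del / 2 by rewrite divr_gt0.
move/cvgrPdist_lt: c1 => /(_ _ d2) [N1 _ uN1].
move/cvgrPdist_lt: c2 => /(_ _ d2) [N2 _ vN2].
pose N := maxn N1 N2.
have N1N : (N1 <= N)%N := leq_maxl _ _.
have N2N : (N2 <= N)%N := leq_maxr _ _.
have [uN vN] : `|f1 t - u N t| < del / 2 /\ `|f2 t - v N t| < del / 2.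
  by split; [exact: uN1|exact: vN2].
have pbig : r - del < `|u N t|.
  by have := ler_normD (f1 t - u N t) (u N t); rewrite subrK; lra.
exists N => //; exists (u N t, v N t); first by split => //; exists t.
split=> // m Nm /=.
have um : `|f1 t - u m t| < del / 2 by exact/uN1/(leq_trans N1N Nm).
have vm : `|f2 t - v m t| < del / 2 by exact/vN2/(leq_trans N2N Nm).
have := ler_normD (u N t - f1 t) (f1 t - u m t); have := ler_normD (v N t - f2 t) (f2 t - v m t).
rewrite !addrA !subrK (distrC (u N t) (f1 t)) (distrC (v N t) (f2 t)); split; lra.
Qed.

Lemma Linfty_subadd f g : Linfty_dom mu f -> Linfty_dom mu g ->
  ess_norm mu (f + g) <= ess_norm mu f + ess_norm mu g.
Proof. by move=> [_ fb] [_ gb]; exact: ler_ess_normD. Qed.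

Lemma Linfty_homog (a : R) f : Linfty_dom mu f -> ess_norm mu (a *: f) = `|a| * ess_norm mu f.
Proof. by move=> [_ fb]; exact: ess_normZ. Qed.

Lemma star2_Linfty_witnessP : star2_Linfty mu X <->
  forall f1 f2, Linfty_dom mu f1 -> Linfty_dom mu f2 ->
  ess_norm mu f1 = 1 -> ess_norm mu f2 = 1 -> forall eps, 0 < eps <= 1 ->
  exists phi, star2_witness (@Linfty_dom _ _ _ mu X) (@ess_norm _ _ _ mu X) phi f1 f2 eps.
Proof. exact: (star2_witnessP (@Linfty_dom_lin) Linfty_subadd Linfty_homog). Qed.

Lemma ess_norm_ge_near E g (x : X) del : ess_bounded mu g -> ~ mu.-negligible E ->
  {ae mu, forall t, E t -> `|x - g t| <= del} -> `|x| - del <= ess_norm mu g.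
Proof.
move=> gb nE xg; apply: ess_norm_ge gb nE _; apply: filterS xg => t xgt Et.
by have := ler_normD (x - g t) (g t); rewrite subrK; have := xgt Et; lra.
Qed.

Lemma ess_norm_patch_le E (y : X) f : ess_bounded mu f -> ess_norm mu f <= 1 -> `|y| <= 1 ->
  ess_norm mu (patch f E (cst y)) <= 1.
Proof.
move=> fb f1 y1; apply/ler_addgt0Pr => e e0; apply: ess_norm_le; first by lra.
have /(ess_norm_lt fb) : ess_norm mu f < 1 + e by lra.
by apply: filterS => t ft; rewrite /patch; case: ifPn => _ /=; lra.
Qed.

Lemma ess_norm_sub_patch_le E (q y : X) f del : 0 <= del ->
  {ae mu, forall t, E t -> `|q - f t| <= del} ->
  ess_norm mu (f - patch f E (cst y)) <= `|q - y| + del.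
Proof.
move=> del0 qf; apply: ess_norm_le; first by rewrite addr_ge0.
apply: filterS qf => t qft; rewrite !fctE /patch.
case: ifPn => [/set_mem Et|_]; last by rewrite subrr normr0 addr_ge0.
have := ler_normD (f t - q) (q - y); rewrite addrA subrK (distrC (f t) q).
by have := qft Et; lra.
Qed.

Lemma Linfty_transplant f1 f2 E (p q y w : X) del : 0 <= del ->
  Linfty_dom mu f1 -> Linfty_dom mu f2 -> ess_norm mu f2 <= 1 -> `|y| <= 1 -> `|w| <= 1 ->
  measurable E -> ~ mu.-negligible E ->
  {ae mu, forall t, E t -> `|p - f1 t| <= del /\ `|q - f2 t| <= del} ->
  exists h k, [/\ Linfty_dom mu h /\ ess_norm mu h <= 1, Linfty_dom mu k /\ ess_norm mu k <= 1,
    ess_norm mu (f2 - h) + ess_norm mu (f2 + k) <= `|q - y| + `|q + w| + 2 * del &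
    `|p + y + w| - del <= ess_norm mu (f1 + h + k)].
Proof.
move=> del0 Df1 Df2 nf2 y1 w1 mE nE near; have Dlin := @Linfty_dom_lin.
pose h := patch f2 E (cst y); pose k := - patch f2 E (cst (- w)).
have Dh : Linfty_dom mu h by exact: Linfty_dom_patch.
have Dk : Linfty_dom mu k by apply/(D_opp Dlin)/Linfty_dom_patch.
exists h, k; split.
- by split => //; apply: ess_norm_patch_le Df2.2 nf2 y1.
- split; rewrite // (seminormN Linfty_homog); last exact: Linfty_dom_patch.
  by apply: ess_norm_patch_le Df2.2 nf2 _; rewrite normrN.
- have near2 : {ae mu, forall t, E t -> `|q - f2 t| <= del} by apply: filterS near => t n /n[].
  have := ess_norm_sub_patch_le y del0 near2; have := ess_norm_sub_patch_le (- w) del0 near2.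
  by rewrite opprK; lra.
- apply: ess_norm_ge_near nE _; first exact: (D_add Dlin (D_add Dlin Df1 Dh) Dk).2.
  apply: filterS near => t n Et; rewrite /h /k !fctE /patch (mem_set Et) /= opprK.
  by rewrite [f1 t + y + w]addrC addrKA [f1 t + y]addrC addrKA; exact: (n Et).1.
Qed.

Hypothesis mu_pos : (0 < mu setT)%E.

Lemma star2_normed_of_Linfty : star2_Linfty mu X -> star2_normed X.
Proof.
move=> /star2_Linfty_witnessP HL; apply/star2_normed_witnessP.
move=> z1 z2 nz1 nz2 eps /andP[eps0 eps1]; have Dlin := @Linfty_dom_lin.
pose del := eps / 3; pose e := del / 3.
have del01 : 0 < del <= 1 by apply/andP; split; rewrite /del; lra.
have e01 : 0 < e <= 1 by apply/andP; split; rewrite /e /del; lra.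
have Dz1 := Linfty_dom_cst z1; have Dz2 := Linfty_dom_cst z2.
have [Phi [sPhi [_ _ Phi1] [h [k [[Dh nh Phih] [Dk nk Phik] hk]]]]] :=
  HL _ _ Dz1 Dz2 (etrans (ess_norm_cst z1 mu_pos) nz1) (etrans (ess_norm_cst z2 mu_pos) nz2) e e01.
have Dsum := D_add Dlin (D_add Dlin Dz1 Dh) Dk.
have big : ~ {ae mu, forall t, `|(cst z1 + h + k) t| <= 3 - del}.
  apply: ess_norm_gt; first by rewrite /del; lra.
  have Phi_le := dual_sphere_le Dlin Linfty_subadd Linfty_homog sPhi Dsum.
  apply: lt_le_trans (le_trans (ler_norm _) Phi_le); have [Phil _ _] := sPhi.
  rewrite (lin_onD Phil (D_add Dlin Dz1 Dh) Dk) (lin_onD Phil Dz1 Dh).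
  by rewrite /e in Phi1 Phih Phik; lra.
have small f : Linfty_dom mu f -> {ae mu, forall t, `|f t| < ess_norm mu f + e}.
  by move=> Df; apply: (ess_norm_lt Df.2); rewrite ltrDl; case/andP: e01.
have [t [bigt [[[ht kt] hzt] kzt]]] := ae_exists_not big
  (filterI (filterI (filterI (small _ Dh) (small _ Dk)) (small _ (D_sub Dlin Dz2 Dh)))
     (small _ (D_add Dlin Dz2 Dk))).
move/negP: bigt; rewrite !fctE -ltNge => bigt.
have {hzt}hzt : `|z2 - h t| < ess_norm mu (cst z2 - h) + e := hzt.
have {kzt}kzt : `|z2 + k t| < ess_norm mu (cst z2 + k) + e := kzt.
have -> : eps = 3 * del by rewrite /del; field.
apply: (@normed_witness_of_triple _ _ z1 z2 (h t) (k t) del nz1 del01) => //;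
  rewrite /e in ht kt hzt kzt hk; lra.
Qed.

Lemma star2_Linfty_of_normed : star2_normed X -> star2_Linfty mu X.
Proof.
move=> HX; apply/star2_Linfty_witnessP => f1 f2 Df1 Df2 nf1 nf2 eps /andP[eps0 eps1].
have Dlin := @Linfty_dom_lin; pose del := eps / 32; pose e := eps / 4.
have del0 : 0 < del by rewrite divr_gt0.
have e01 : 0 < e <= 1 by apply/andP; split; rewrite /e; lra.
have f1big : ~ {ae mu, forall t, `|f1 t| <= 1 - del}.
  by apply: ess_norm_gt; rewrite ?nf1 /del; lra.
have [E [p [q [mE nE pbig near]]]] := strongly_measurable_near_cst del0 Df1.1 Df2.1 f1big.
have qsmall : `|q| < 1 + 2 * del.
  have /(ess_norm_lt Df2.2) f2b : ess_norm mu f2 < 1 + del by rewrite nf2 ltrDl.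
  have [t [Et [nt f2t]]] := not_negligible_ae_exists nE (filterI near f2b).
  by have [_] := nt Et; have := ler_normD (q - f2 t) (f2 t); rewrite subrK; lra.
have p0 : p != 0 by rewrite -normr_gt0 /del in pbig *; lra.
have [y [w [ny nw pyw qyw]]] := star2_normed_pair q HX p0 e01.
have nf2le : ess_norm mu f2 <= 1 by rewrite nf2.
have [h [k [[Dh nh] [Dk nk] hk sumh]]] :=
  Linfty_transplant (ltW del0) Df1 Df2 nf2le ny nw mE nE near.
have f1hk : 3 - eps < ess_norm mu (f1 + h + k).
  by apply: lt_le_trans sumh; rewrite /e /del in pbig pyw *; nra.
have nf1le : ess_norm mu f1 <= 1 by rewrite nf1.
have eps3 : eps <= 3 by lra.
have [Phi [sPhi Phif1 Phih Phik]] :=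
  norming_functional_triple Dlin Linfty_subadd Linfty_homog Df1 Dh Dk nf1le nh nk eps3 f1hk.
exists Phi; split => //; exists h, k; split => //; apply: le_lt_trans hk _.
suff : `|q| * (2 + e) + 2 * `|1 - `|q| | < 2 + eps - 2 * del by lra.
move: (normr_ge0 q) qsmall; rewrite /e /del; clear -eps0 eps1; move: `|q| => lam lam0 lam1.
by have [l1|l1] := leP lam 1; [rewrite ger0_norm ?subr_ge0|rewrite ler0_norm ?subr_le0 ?ltW]; nra.
Qed.

End Linfty.

Unset Implicit Arguments.

Theorem theorem2p2 (R : realType) (X : completeNormedModType R)
  (d : measure_display) (T : measurableType d)
  (mu : {measure set T -> \bar R}) :
  sigma_finite setT mu -> (0 < mu setT)%E ->
  (star2_normed X <-> star2_Linfty mu X).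
Proof.
move=> _ mu_pos; split; [exact: star2_Linfty_of_normed|exact: star2_normed_of_Linfty].
Qed.
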